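(* Assume $w(C)=f(|C|)$ for all $C\in\mathcal I$, for some positive function $f$. Let $\mathcal I=\{C\subset[K]\setminus\mathcal Y_0:\ k_0\le|C|\le K_0\}$ for some $0\le k_0\le K_0\le K$ and a (possibly empty) excluded set $\mathcal Y_0\subset[K]$ with $\mathcal Y_0\ne[K]$. Then for every $x\in\mathcal X$ and all $0\le\mu_1<\mu_2$, $C^{\mu_1}(x)\subseteq C^{\mu_2}(x)$.
   Context: Classification setting: $\mathcal Y=[K]=\{1,\dots,K\}$, $\alpha\in(0,1)$. For each $x$ and $k\in[K]$, $\hat P(Y=k\mid X=x)$ is a fixed estimated class probability, and $\hat p_C(x)=\sum_{k\in C}\hat P(Y=k\mid X=x)$ for $C\subseteq[K]$. $\mathcal I$ is enumerated in a fixed lexicographic order. For $\mu\ge0$ let $\hat\ell_{x,C}(\mu)=w(C)\hat p_C(x)+\mu(\hat p_C(x)-(1-\alpha))$. $C^\mu(x)$ is a maximizer of $\hat\ell_{x,C}(\mu)$ over $C\in\mathcal I$, with ties broken in favor of the smallest weight $w(C)$ and then the smallest index in the ordering. *)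

From HB Require Import structures.
From mathcomp Require Import all_boot all_order all_algebra.
Set Implicit Arguments. Unset Strict Implicit. Unset Printing Implicit Defensive.
Import Order.TTheory GRing.Theory Num.Theory.
Local Open Scope ring_scope.

Fixpoint lex_le (s t : seq nat) : bool :=
  match s, t with
  | [::], _ => true
  | _ :: _, [::] => false
  | a :: s', b :: t' => (a < b)%N || ((a == b) && lex_le s' t')
  end.

(* A subset of [K] (classes 'I_K, i.e. 0..K-1) as its increasing list of elements. *)
Definition set_seq (K : nat) (C : {set 'I_K}) : seq nat :=
  sort leq [seq val i | i <- enum C].

Definition set_lex_le (K : nat) (C D : {set 'I_K}) : bool :=
  lex_le (set_seq C) (set_seq D).

Definition Ifam (K : nat) (Y0 : {set 'I_K}) (k0 K0 : nat) : {set {set 'I_K}} :=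
  [set C : {set 'I_K} | (C \subset ~: Y0) && (k0 <= #|C| <= K0)%N].

Definition phat (R : numDomainType) (X : Type) (K : nat)
  (P : X -> 'I_K -> R) (x : X) (C : {set 'I_K}) : R :=
  \sum_(k in C) P x k.

Definition lhat (R : numDomainType) (X : Type) (K : nat)
  (P : X -> 'I_K -> R) (w : {set 'I_K} -> R) (alpha : R)
  (x : X) (C : {set 'I_K}) (mu : R) : R :=
  w C * phat P x C + mu * (phat P x C - (1 - alpha)).

Definition is_Cmu (R : realDomainType) (X : Type) (K : nat)
  (P : X -> 'I_K -> R) (w : {set 'I_K} -> R) (alpha : R)
  (I : {set {set 'I_K}}) (x : X) (mu : R) (C : {set 'I_K}) : Prop :=
  C \in I /\
  forall D, D \in I ->
    (lhat P w alpha x D mu < lhat P w alpha x C mu) \/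
    (lhat P w alpha x D mu = lhat P w alpha x C mu /\
      (w C < w D \/ (w C = w D /\ set_lex_le C D))).

From HB Require Import structures.
From mathcomp Require Import all_boot all_order all_algebra.
From mathcomp Require Import ring.
Set Implicit Arguments. Unset Strict Implicit. Unset Printing Implicit Defensive.
Import Order.TTheory GRing.Theory Num.Theory.

(* Exchanging a class a in C for a class b outside C keeps the size of C,
   hence its weight f(|C|), and changes the objective by
   (f(|C|) + mu) (P b - P a), a positive multiple of P b - P a.  So an
   optimal set can only be improved by an exchange that raises the
   probability, and the ties P b = P a are decided by the lexicographic
   order, in which moving to a smaller class makes the set smaller.  Hence
   C^mu1 and C^mu2 cannot each contain a class missing from the other: one
   contains the other.  If C^mu2 were strictly inside C^mu1, it would have
   smaller p-hat, and raising mu from mu1 to mu2 only favours larger p-hat,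
   so C^mu1 would beat C^mu2 at mu2. *)

Lemma lex_le_cat p s t : lex_le (p ++ s) (p ++ t) = lex_le s t.
Proof. by elim: p => //= a p ->; rewrite ltnn eqxx. Qed.

Lemma lex_le_antisym s t : lex_le s t -> lex_le t s -> s = t.
Proof.
elim: s t => [|x s IH] [|y t] //= /orP[xy|/andP[/eqP exy st]] /orP[yx|/andP[/eqP eyx ts]].
- by move: (ltn_trans xy yx); rewrite ltnn.
- by rewrite eyx ltnn in xy.
- by rewrite exy ltnn in yx.
- by rewrite exy (IH t).
Qed.

Lemma sorted_ltn_filter_cat c s : sorted ltn s ->
  [seq z <- s | z < c] ++ [seq z <- s | c <= z] = s.
Proof.
elim: s => //= a s IH a_s; case: ltnP => [ac|ca] /=; first by rewrite IH ?(path_sorted a_s).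
have ge_c : all (leq c) s.
  by apply/allP => z /(allP (order_path_min ltn_trans a_s)) /ltnW; apply: leq_trans.
rewrite (all_filterP ge_c) (@eq_in_filter _ _ pred0) ?filter_pred0 //.
by move=> z /(allP ge_c); rewrite ltnNge => ->.
Qed.

Lemma lex_leF_first_diff s t (c d : nat) : sorted ltn s -> sorted ltn t ->
  (forall z, z < c -> (z \in s) = (z \in t)) ->
  c \notin s -> c \in t -> d \in s -> c < d -> lex_le s t = false.
Proof.
move=> s_sorted t_sorted eq_below cNs ct ds cd.
have eq_prefix : [seq z <- s | z < c] = [seq z <- t | z < c].
  apply: (irr_sorted_eq ltn_trans ltnn); rewrite ?sorted_filter //; try exact: ltn_trans.
  by move=> z; rewrite !mem_filter; case: ltnP => // zc; rewrite eq_below.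
rewrite -(sorted_ltn_filter_cat c s_sorted) -(sorted_ltn_filter_cat c t_sorted).
rewrite eq_prefix lex_le_cat.
(* The suffix of t starts with c, the suffix of s with an element above c. *)
have : d \in [seq z <- s | c <= z] by rewrite mem_filter ltnW.
have : all (fun z => c < z) [seq z <- s | c <= z].
  apply/allP => z; rewrite mem_filter => /andP[cz zs].
  by rewrite ltn_neqAle cz andbT; apply: contraNneq cNs => ->.
have : c \in [seq z <- t | c <= z] by rewrite mem_filter leqnn.
have : sorted ltn [seq z <- t | c <= z] by rewrite sorted_filter //; apply: ltn_trans.
case: [seq z <- t | c <= z] => [|y t'] //; case: [seq z <- s | c <= z] => [|x s'] //=.
move=> y_path; rewrite inE => c_t /andP[cx _] _.
have yc : y <= c.
  by case/predU1P: c_t => [->|/(allP (order_path_min ltn_trans y_path))/ltnW].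
have yx := leq_ltn_trans yc cx.
by rewrite ltnNge (ltnW yx) gtn_eqF.
Qed.

Section LexOrderOnSets.

Variable K : nat.
Implicit Types (C D : {set 'I_K}) (a b : 'I_K).

Lemma set_seq_sorted C : sorted ltn (set_seq C).
Proof.
rewrite ltn_sorted_uniq_leq sort_uniq (sort_sorted leq_total) andbT.
by rewrite map_inj_uniq ?enum_uniq //; apply: val_inj.
Qed.

Lemma mem_set_seq C i : (val i \in set_seq C) = (i \in C).
Proof. by rewrite mem_sort mem_map ?mem_enum //; apply: val_inj. Qed.

Lemma set_seq_ltn C z : z \in set_seq C -> z < K.
Proof. by rewrite mem_sort => /mapP[i _ ->]; apply: ltn_ord. Qed.

Lemma set_lex_le_antisym C D : set_lex_le C D -> set_lex_le D C -> C = D.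
Proof.
move=> CD DC; apply/setP => i.
by rewrite -!mem_set_seq (lex_le_antisym CD DC).
Qed.

Lemma set_lex_le_exchangeF C a b : a \in C -> b \notin C -> val b < val a ->
  set_lex_le C (b |: (C :\ a)) = false.
Proof.
move=> aC bNC ba; apply: (lex_leF_first_diff (c := val b) (d := val a));
  rewrite ?set_seq_sorted //.
- move=> z zb; case: (ltnP z K) => [zK|Kz]; last first.
    by apply/idP/idP => /set_seq_ltn; rewrite ltnNge Kz.
  rewrite -[z]/(val (Ordinal zK)) !mem_set_seq !inE.
  rewrite -val_eqE (ltn_eqF zb) -val_eqE (ltn_eqF (ltn_trans zb ba)) //.
- by rewrite mem_set_seq.
- by rewrite mem_set_seq setU11.
- by rewrite mem_set_seq.
Qed.

End LexOrderOnSets.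

Local Open Scope ring_scope.

Lemma subset_le_phat (R : numDomainType) (X : Type) (K : nat)
    (P : X -> 'I_K -> R) x (C D : {set 'I_K}) :
  (forall k, 0 <= P x k) -> C \subset D -> phat P x C <= phat P x D.
Proof.
move=> P_ge0 CD; rewrite /phat [leRHS](big_setID C) /= (setIidPr CD) lerDl.
exact: sumr_ge0.
Qed.

Lemma phat_exchange (R : numDomainType) (X : Type) (K : nat)
    (P : X -> 'I_K -> R) x (C : {set 'I_K}) a b :
  a \in C -> b \notin C -> phat P x (b |: (C :\ a)) = phat P x C - P x a + P x b.
Proof.
move=> aC bNC; rewrite /phat big_setU1 /=; last by rewrite !inE negb_and bNC orbT.
by rewrite (big_setD1 _ aC) /=; ring.
Qed.

Section Optimality.

Variables (R : realFieldType) (X : Type) (K : nat) (P : X -> 'I_K -> R).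
Variables (w : {set 'I_K} -> R) (alpha : R) (I : {set {set 'I_K}}) (x : X).
Local Notation ell := (lhat P w alpha x).
Local Notation Cmu := (is_Cmu P w alpha I x).

Lemma tie_break_antisym C D :
  w C < w D \/ w C = w D /\ set_lex_le C D ->
  w D < w C \/ w D = w C /\ set_lex_le D C -> C = D.
Proof.
case=> [wCD|[wCD CD]] [wDC|[wDC DC]].
- by move: (lt_trans wCD wDC); rewrite ltxx.
- by move: wCD; rewrite wDC ltxx.
- by move: wDC; rewrite wCD ltxx.
- exact: set_lex_le_antisym.
Qed.

Lemma is_Cmu_exchange mu C a b : 0 < w C + mu -> Cmu mu C ->
  a \in C -> b \notin C -> b |: (C :\ a) \in I -> w (b |: (C :\ a)) = w C ->
  P x b < P x a \/ P x b = P x a /\ set_lex_le C (b |: (C :\ a)).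
Proof.
move=> wmu_gt0 [_ C_opt] aC bNC C'I wC'.
have gain : ell (b |: (C :\ a)) mu - ell C mu = (w C + mu) * (P x b - P x a).
  by rewrite /lhat wC' phat_exchange //; ring.
case: (C_opt _ C'I) => [lt_ell|[eq_ell tie]].
- by left; rewrite -subr_lt0 gain pmulr_rlt0 // subr_lt0 in lt_ell.
- have : (w C + mu) * (P x b - P x a) = 0 by rewrite -gain eq_ell subrr.
  move/eqP; rewrite mulf_eq0 (gt_eqF wmu_gt0) subr_eq0 => /eqP Pba.
  by right; split=> //; case: tie => [|[]//]; rewrite wC' ltxx.
Qed.

Lemma is_Cmu_le_phat mu1 mu2 C1 C2 : mu1 < mu2 -> Cmu mu1 C1 -> Cmu mu2 C2 ->
  phat P x C2 <= phat P x C1 -> C1 = C2.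
Proof.
move=> lt12 [C1I opt1] [C2I opt2] le_p.
have shift : ell C1 mu2 - ell C2 mu2 =
    ell C1 mu1 - ell C2 mu1 + (mu2 - mu1) * (phat P x C1 - phat P x C2).
  by rewrite /lhat; ring.
have shift_ge0 : 0 <= (mu2 - mu1) * (phat P x C1 - phat P x C2).
  by rewrite mulr_ge0 // subr_ge0 // ltW.
have le1 : 0 <= ell C1 mu1 - ell C2 mu1.
  by rewrite subr_ge0; case: (opt1 _ C2I) => [/ltW|[->]].
case: (opt2 _ C1I) => [lt2|[eq2 tie2]].
  by move: lt2; rewrite -subr_lt0 shift ltNge addr_ge0.
case: (opt1 _ C2I) => [lt1|[_ tie1]]; last exact: tie_break_antisym tie1 tie2.
by move: shift; rewrite eq2 subrr => /esym/eqP; rewrite gt_eqF // ltr_wpDr // subr_gt0.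
Qed.

End Optimality.

Section ExchangeInIfam.

Variables (K : nat) (Y0 : {set 'I_K}) (k0 K0 : nat).
Implicit Types (C : {set 'I_K}) (a b : 'I_K).

Lemma card_exchange C a b : a \in C -> b \notin C -> #|b |: (C :\ a)| = #|C|.
Proof.
move=> aC bNC; rewrite cardsU1 [in RHS](cardsD1 a C) aC.
by rewrite !inE negb_and bNC orbT.
Qed.

Lemma Ifam_exchange C a b : C \in Ifam Y0 k0 K0 ->
  a \in C -> b \notin C -> b \notin Y0 -> b |: (C :\ a) \in Ifam Y0 k0 K0.
Proof.
move=> + aC bNC bNY0; rewrite !inE card_exchange // => /andP[CY0 ->]; rewrite andbT.
apply/subsetP => i; rewrite !inE => /predU1P[-> //|/andP[_ iC]].
by move/subsetP/(_ i iC): CY0; rewrite inE.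
Qed.

Lemma Ifam_notin_excluded C c : C \in Ifam Y0 k0 K0 -> c \in C -> c \notin Y0.
Proof. by rewrite inE => /andP[/subsetP CY0 _] /CY0; rewrite inE. Qed.

End ExchangeInIfam.

Section CardinalityWeights.

Variables (R : realFieldType) (X : Type) (K : nat) (P : X -> 'I_K -> R).
Variables (alpha : R) (Y0 : {set 'I_K}) (k0 K0 : nat).
Variables (f : nat -> R) (w : {set 'I_K} -> R) (x : X).
Hypothesis f_gt0 : forall n, 0 < f n.
Hypothesis w_card : forall C, C \in Ifam Y0 k0 K0 -> w C = f #|C|.
Local Notation Cmu := (is_Cmu P w alpha (Ifam Y0 k0 K0) x).

Lemma is_Cmu_Ifam_exchange mu C a b : 0 <= mu -> Cmu mu C ->
  a \in C -> b \notin C -> b \notin Y0 ->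
  P x b < P x a \/ P x b = P x a /\ set_lex_le C (b |: (C :\ a)).
Proof.
move=> mu_ge0 C_opt aC bNC bNY0; have CI := C_opt.1.
have C'I := Ifam_exchange CI aC bNC bNY0.
apply: (is_Cmu_exchange _ C_opt) => //.
  by rewrite w_card // ltr_wpDr.
by rewrite !w_card // card_exchange.
Qed.

Lemma is_Cmu_Ifam_nested mu1 mu2 C1 C2 : 0 <= mu1 -> 0 <= mu2 ->
  Cmu mu1 C1 -> Cmu mu2 C2 -> (C1 \subset C2) || (C2 \subset C1).
Proof.
move=> mu1_ge0 mu2_ge0 opt1 opt2; apply/contraT; rewrite negb_or.
case/andP=> /subsetPn[a aC1 aNC2] /subsetPn[b bC2 bNC1].
have aNY0 := Ifam_notin_excluded opt1.1 aC1.
have bNY0 := Ifam_notin_excluded opt2.1 bC2.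
have [lt_Pba|[eq_Pba lex1]] := is_Cmu_Ifam_exchange mu1_ge0 opt1 aC1 bNC1 bNY0;
have [lt_Pab|[eq_Pab lex2]] := is_Cmu_Ifam_exchange mu2_ge0 opt2 bC2 aNC2 aNY0.
- by move: (lt_trans lt_Pba lt_Pab); rewrite ltxx.
- by move: lt_Pba; rewrite eq_Pab ltxx.
- by move: lt_Pab; rewrite eq_Pba ltxx.
case: (ltngtP (val a) (val b)) => [lt_ab|lt_ba|/val_inj eq_ab].
- by rewrite set_lex_le_exchangeF in lex2.
- by rewrite set_lex_le_exchangeF in lex1.
- by rewrite eq_ab bC2 in aNC2.
Qed.

End CardinalityWeights.

Theorem proposition12 (R : realFieldType) (X : Type) (K : nat)
  (P : X -> 'I_K -> R)
  (hP0 : forall x k, 0 <= P x k)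
  (hP1 : forall x, \sum_(k < K) P x k = 1)
  (alpha : R) (halpha : 0 < alpha < 1)
  (Y0 : {set 'I_K}) (hY0 : Y0 != [set: 'I_K])
  (k0 K0 : nat) (hk0 : (k0 <= K0)%N) (hK0 : (K0 <= K)%N)
  (f : nat -> R) (hf : forall n, 0 < f n)
  (w : {set 'I_K} -> R)
  (hw : forall C, C \in Ifam Y0 k0 K0 -> w C = f #|C|) :
  forall (x : X) (mu1 mu2 : R), 0 <= mu1 -> mu1 < mu2 ->
  forall C1 C2 : {set 'I_K},
    is_Cmu P w alpha (Ifam Y0 k0 K0) x mu1 C1 ->
    is_Cmu P w alpha (Ifam Y0 k0 K0) x mu2 C2 ->
    C1 \subset C2.
Proof.
move=> x mu1 mu2 mu1_ge0 lt12 C1 C2 opt1 opt2.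
have mu2_ge0 := le_trans mu1_ge0 (ltW lt12).
case/orP: (is_Cmu_Ifam_nested hf hw mu1_ge0 mu2_ge0 opt1 opt2) => // C2C1.
by rewrite (is_Cmu_le_phat lt12 opt1 opt2 (subset_le_phat (hP0 x) C2C1)).
Qed.
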